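(* Let $d\ge2$ be an integer and, for real $b,c$, let $$\rho_{bc}=a\sum_{i=0}^{d-1}|ii\rangle\langle ii|+b\sum_{i<j}|\psi^-_{ij}\rangle\langle\psi^-_{ij}|+c\sum_{i<j}|\psi^+_{ij}\rangle\langle\psi^+_{ij}|,\quad a=\frac1d\Big(1-(b+c)\frac{d(d-1)}2\Big).$$ If $(b,c)$ lies in the convex hull of the four points $B=\big(\tfrac{1}{d(d-1)},0\big)$, $C=\big(\tfrac{4}{d(3d-2)},0\big)$, $G=\big(\tfrac{3}{d(2d-1)},\tfrac{1}{d(2d-1)}\big)$, $K=\big(\tfrac1{d(d-1)},\tfrac1{d(d-1)}\big)$ in the $(b,c)$-plane, then $\rho_{bc}$ is pseudo one-copy undistillable, i.e. $\langle\phi|\rho_{bc}^{PT}|\phi\rangle\ge0$ for all $|\phi\rangle\in\mathbb{C}^d\otimes\mathbb{C}^d$ of Schmidt rank two.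
   Context: $|\psi^{\pm}_{ij}\rangle=\frac1{\sqrt2}(|ij\rangle\pm|ji\rangle)$, sums over $0\le i<j\le d-1$. $X^{PT}$ is the partial transpose on the second factor, $\langle ij|X^{PT}|kl\rangle=\langle il|X|kj\rangle$. *)

From HB Require Import structures.
From mathcomp Require Import all_boot all_order all_algebra.
From mathcomp Require Import reals.
From mathcomp Require Export complex.
Set Implicit Arguments. Unset Strict Implicit. Unset Printing Implicit Defensive.
Import Order.TTheory GRing.Theory Num.Theory.
Local Open Scope ring_scope.

Section Defs.
Variable R : realType.
Local Notation C := R[i].
Variable d : nat.

(* A vector |phi> in C^d (x) C^d, given by its coefficients phi i j = <ij|phi>. *)
Definition bivec := 'I_d -> 'I_d -> C.
(* An operator X on C^d (x) C^d, given by its entries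
   op X i j k l = <ij|X|kl>. *)
Definition biop := 'I_d -> 'I_d -> 'I_d -> 'I_d -> C.

Definition ket (i j : 'I_d) : bivec := fun k l => ((k == i) && (l == j))%:R.

(* |psi^{+/-}_ij> = (|ij> +/- |ji>)/sqrt 2 ; s = 1 for +, s = -1 for - *)
Definition psi (s : C) (i j : 'I_d) : bivec :=
  fun k l => (ket i j k l + s * ket j i k l) / ((Num.sqrt (2 : R))%:C)%C.

Definition outer (v w : bivec) : biop :=
  fun i j k l => v i j * conjc (w k l).

Definition opD (X Y : biop) : biop := fun i j k l => X i j k l + Y i j k l.
Definition opZ (s : C) (X : biop) : biop := fun i j k l => s * X i j k l.
Definition opsum (I : finType) (P : pred I) (F : I -> biop) : biop :=
  fun i j k l => \sum_(x | P x) F x i j k l.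

Definition a_coef (b c : R) : R :=
  d%:R^-1 * (1 - (b + c) * (d%:R * (d%:R - 1) / 2)).

Definition rho_bc (b c : R) : biop :=
  opD (opZ ((a_coef b c)%:C)%C
         (opsum (fun _ : 'I_d => true) (fun i => outer (ket i i) (ket i i))))
   (opD (opZ (b%:C)%C (opsum (fun p : 'I_d * 'I_d => (p.1 < p.2)%N)
                     (fun p => outer (psi (-1) p.1 p.2) (psi (-1) p.1 p.2))))
        (opZ (c%:C)%C (opsum (fun p : 'I_d * 'I_d => (p.1 < p.2)%N)
                     (fun p => outer (psi 1 p.1 p.2) (psi 1 p.1 p.2))))).

(* partial transpose on the second factor: <ij|X^PT|kl> = <il|X|kj> *)
Definition PT (X : biop) : biop := fun i j k l => X i l k j.

Definition expect (X : biop) (phi : bivec) : C :=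
  \sum_(i < d) \sum_(j < d) \sum_(k < d) \sum_(l < d)
     conjc (phi i j) * X i j k l * phi k l.

(* Schmidt rank of |phi> = rank of its d x d coefficient matrix *)
Definition schmidt_rank (phi : bivec) : nat := \rank (\matrix_(i, j) phi i j).

Definition in_hull_BCGK (b c : R) : Prop :=
  let dd := (d%:R : R) in
  let B := (1 / (dd * (dd - 1)), 0) in
  let Cp := (4 / (dd * (3 * dd - 2)), 0) in
  let G := (3 / (dd * (2 * dd - 1)), 1 / (dd * (2 * dd - 1))) in
  let K := (1 / (dd * (dd - 1)), 1 / (dd * (dd - 1))) in
  exists l1 l2 l3 l4 : R,
    [/\ 0 <= l1, 0 <= l2, 0 <= l3 & 0 <= l4] /\ l1 + l2 + l3 + l4 = 1 /\
    b = l1 * B.1 + l2 * Cp.1 + l3 * G.1 + l4 * K.1 /\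
    c = l1 * B.2 + l2 * Cp.2 + l3 * G.2 + l4 * K.2.

End Defs.

Arguments rho_bc {R} d b c.
Arguments in_hull_BCGK {R} d b c.

From HB Require Import structures.
From mathcomp Require Import all_boot all_order all_algebra.
From mathcomp Require Import reals complex.
From mathcomp Require Import ring lra.
Import Order.TTheory GRing.Theory Num.Theory.
Local Open Scope ring_scope.

(** Write D = sum_i |phi_ii|^2, F = sum_ij |phi_ij|^2 and T = |sum_i phi_ii|^2.
    Expanding rho_bc gives
      <phi| rho_bc^PT |phi> = (a - c) D + (b + c)/2 F + (c - b)/2 T.
    Always D <= F and, by Cauchy-Schwarz, T <= d D.  If the coefficient matrix
    M of phi has rank r, then M = X S with S an r x d coisometry, so
    tr M = tr (S X) is a sum of r terms each bounded by Cauchy-Schwarz, and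
    T <= r F.  On the hull of B, C, G, K the form is a nonnegative combination
    of F - D, d D - T and 2 F - T, which are all nonnegative when r = 2. *)

Section TraceInequalities.
Context {C : numClosedFieldType}.
Local Open Scope sesquilinear_scope.

Lemma cauchy_schwarz_sum {n} (x y : 'I_n -> C) :
  (\sum_i x i * y i)^* * (\sum_i x i * y i) <=
  (\sum_i (x i)^* * x i) * (\sum_i (y i)^* * y i).
Proof.
pose u : 'rV[C]_n := \row_i x i.
pose v : 'rV[C]_n := \row_i (y i)^*.
have : `|dotmx u v| ^+ 2 <= dotmx u u * dotmx v v.
  exact: leif_le (CauchySchwarz (@dotmx C n) u v).
rewrite !dotmxE !mxE normCK mulrC.
have -> : \sum_j u 0 j * (v ^t*) j 0 = \sum_i x i * y i.
  by apply: eq_bigr => i _; rewrite !mxE conjCK.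
have -> : \sum_j u 0 j * (u ^t*) j 0 = \sum_i (x i)^* * x i.
  by apply: eq_bigr => i _; rewrite !mxE mulrC.
have -> // : \sum_j v 0 j * (v ^t*) j 0 = \sum_i (y i)^* * y i.
by apply: eq_bigr => i _; rewrite !mxE conjCK.
Qed.

Lemma norm2_sum_le {n} (z : 'I_n -> C) :
  (\sum_i z i)^* * (\sum_i z i) <= n%:R * \sum_i (z i)^* * z i.
Proof.
have := cauchy_schwarz_sum (fun _ => 1) z.
under eq_bigr do rewrite mul1r.
under [X in _ <= X * _ -> _]eq_bigr do rewrite conjC1 mul1r.
by rewrite sumr_const card_ord.
Qed.

Lemma mxtrace_mul_trmxC {m n} (M : 'M[C]_(m, n)) :
  \tr (M *m M ^t*) = \sum_i \sum_j (M i j)^* * M i j.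
Proof.
by apply: eq_bigr => i _; rewrite mxE; apply: eq_bigr => j _; rewrite !mxE mulrC.
Qed.

Lemma mxtrace_norm2_le_factor {n r} (M : 'M[C]_n) X (S : 'M[C]_(r, n)) :
  X *m S = M -> S *m S ^t* = 1%:M ->
  (\tr M)^* * \tr M <= r%:R * \sum_i \sum_j (M i j)^* * M i j.
Proof.
move=> <- SS.
have -> : \sum_i \sum_j ((X *m S) i j)^* * (X *m S) i j =
          \sum_k \sum_i (X i k)^* * X i k.
  rewrite -!mxtrace_mul_trmxC trmx_mul map_mxM mulmxA -(mulmxA X) SS mulmx1.
  by rewrite mxtrace_mul_trmxC exchange_big.
rewrite mxtrace_mulC; apply: le_trans (norm2_sum_le _) _.
rewrite ler_wpM2l ?ler0n //; apply: ler_sum => k _.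
have S_row_unit : \sum_i (S k i)^* * S k i = 1.
  have := congr1 (fun A : 'M[C]_r => A k k) SS; rewrite !mxE eqxx mulr1n => <-.
  by apply: eq_bigr => i _; rewrite !mxE mulrC.
by rewrite mxE -[leRHS]mul1r -S_row_unit cauchy_schwarz_sum.
Qed.

Lemma mxtrace_norm2_le_rank {n} (M : 'M[C]_n) :
  (\tr M)^* * \tr M <= (\rank M)%:R * \sum_i \sum_j (M i j)^* * M i j.
Proof.
pose S := schmidt (row_base M).
have M_sub_S : (M <= S)%MS.
  by apply: submx_trans (schmidt_sub _); rewrite eq_row_base.
apply: (mxtrace_norm2_le_factor M (M *m pinvmx S) S).
  exact: mulmxKpV.
by apply/unitarymxP/schmidt_unitarymx/rank_leq_col.
Qed.

End TraceInequalities.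

Lemma sum_lt_pairs_sym (V : zmodType) n (f : 'I_n -> 'I_n -> V) :
  \sum_(p : 'I_n * 'I_n | (p.1 < p.2)%N) (f p.1 p.2 + f p.2 p.1) =
  \sum_i \sum_j f i j - \sum_i f i i.
Proof.
rewrite pair_big /= (bigID (fun p : 'I_n * 'I_n => (p.1 < p.2)%N) xpredT) /=.
rewrite (bigID (fun p : 'I_n * 'I_n => (p.2 < p.1)%N) (fun p => ~~ _)) /=.
have -> : \sum_(p : 'I_n * 'I_n | ~~ (p.1 < p.2)%N && ~~ (p.2 < p.1)%N)
            f p.1 p.2 = \sum_i f i i.
  rewrite (eq_bigl (fun p : 'I_n * 'I_n => p.1 == p.2)); last first.
    by move=> [x y] /=; rewrite -!leqNgt andbC -eqn_leq.
  rewrite -(pair_big_dep xpredT (fun i j => i == j)) /=.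
  by apply: eq_bigr => i _; rewrite (big_pred1 i) // => j; rewrite /= eq_sym.
rewrite addrA addrK big_split /=; congr (_ + _).
rewrite [RHS](eq_bigl (fun p : 'I_n * 'I_n => (p.2 < p.1)%N)); last first.
  by move=> [x y] /=; case: ltngtP.
rewrite [RHS](reindex_inj (h := fun p : 'I_n * 'I_n => (p.2, p.1))) //=.
by move=> [x y] [x' y'] [-> ->].
Qed.

Section Expectation.
Context {R : realType} {d : nat}.
Local Notation C := R[i].
Implicit Types (X Y : biop R d) (s : C) (p q r t : 'I_d).

Lemma PT_opD X Y : PT (opD X Y) = opD (PT X) (PT Y). Proof. by []. Qed.
Lemma PT_opZ s X : PT (opZ s X) = opZ s (PT X). Proof. by []. Qed.
Lemma PT_opsum (I : finType) (P : pred I) (F : I -> biop R d) :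
  PT (opsum P F) = opsum P (fun x => PT (F x)).
Proof. by []. Qed.

Variable phi : bivec R d.

Lemma eq_expect X Y :
  (forall i j k l, X i j k l = Y i j k l) -> expect X phi = expect Y phi.
Proof.
move=> eqXY; apply: eq_bigr => i _; apply: eq_bigr => j _.
by apply: eq_bigr => k _; apply: eq_bigr => l _; rewrite eqXY.
Qed.

Lemma expect_opD X Y : expect (opD X Y) phi = expect X phi + expect Y phi.
Proof.
rewrite /expect -big_split; apply: eq_bigr => i _; rewrite -big_split.
apply: eq_bigr => j _; rewrite -big_split; apply: eq_bigr => k _.
by rewrite -big_split; apply: eq_bigr => l _; rewrite mulrDr mulrDl.
Qed.

Lemma expect_opZ s X : expect (opZ s X) phi = s * expect X phi.
Proof.
rewrite /expect mulr_sumr; apply: eq_bigr => i _; rewrite mulr_sumr.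
apply: eq_bigr => j _; rewrite mulr_sumr; apply: eq_bigr => k _.
by rewrite mulr_sumr; apply: eq_bigr => l _; rewrite /opZ mulrCA !mulrA.
Qed.

Lemma expect_opsum (I : finType) (P : pred I) (F : I -> biop R d) :
  expect (opsum P F) phi = \sum_(x | P x) expect (F x) phi.
Proof.
rewrite /expect /opsum; symmetry.
rewrite exchange_big; apply: eq_bigr => i _; rewrite exchange_big.
apply: eq_bigr => j _; rewrite exchange_big; apply: eq_bigr => k _.
by rewrite exchange_big; apply: eq_bigr => l _; rewrite mulr_sumr mulr_suml.
Qed.

Lemma expect_PT_outer_ket p q r t :
  expect (PT (outer (ket R p q) (ket R r t))) phi = (phi p t)^* * phi r q.
Proof.
rewrite /expect (big_only1 p) // => [|i /negPf ip _]; last first.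
  by rewrite big1 // => j _; rewrite big1 // => k _; rewrite big1 // => l _;
     rewrite /PT /outer /ket ip !(mul0r, mulr0).
rewrite (big_only1 t) // => [|j /negPf jt _]; last first.
  by rewrite big1 // => k _; rewrite big1 // => l _;
     rewrite /PT /outer /ket jt andbF conjc_nat !(mul0r, mulr0).
rewrite (big_only1 r) // => [|k /negPf kr _]; last first.
  by rewrite big1 // => l _; rewrite /PT /outer /ket kr conjc_nat !(mul0r, mulr0).
rewrite (big_only1 q) // => [|l /negPf lq _]; last first.
  by rewrite /PT /outer /ket lq andbF !(mul0r, mulr0).
by rewrite /PT /outer /ket !eqxx conjc_nat mulr1 mulr1.
Qed.

Lemma expect_PT_outer_psi s p q : s^* = s -> s * s = 1 ->
  expect (PT (outer (psi s p q) (psi s p q))) phi =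
  2^-1 * ((phi p q)^* * phi p q + (phi q p)^* * phi q p
          + s * ((phi p p)^* * phi q q + (phi q q)^* * phi p p)).
Proof.
move=> s_real s_sqr; have s_realc : conjc s = s := s_real.
set u : C := (Num.sqrt (2 : R))%:C%C.
have inv_u_norm2 : u^-1 * conjc u^-1 = 2^-1.
  rewrite conjc_inv conjc_real -invfM -rmorphM /= -expr2 sqr_sqrtr ?ler0n //.
  by rewrite rmorph_nat.
rewrite (@eq_expect _ (PT (opZ (2^-1) (opD (outer (ket R p q) (ket R p q))
   (opD (opZ s (outer (ket R p q) (ket R q p)))
   (opD (opZ s (outer (ket R q p) (ket R p q)))
        (opZ (s * s) (outer (ket R q p) (ket R q p))))))))); last first.
  move=> i j k l; rewrite /PT /outer /psi /opZ /opD -inv_u_norm2.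
  by rewrite !(rmorphM, rmorphD) /= s_realc; ring.
rewrite !PT_opZ !PT_opD !PT_opZ !expect_opZ !expect_opD !expect_opZ.
by rewrite !expect_PT_outer_ket s_sqr; ring.
Qed.

Definition diag_norm2 := \sum_i (phi i i)^* * phi i i.
Definition norm2 := \sum_i \sum_j (phi i j)^* * phi i j.
Definition trace_norm2 := (\sum_i phi i i)^* * \sum_i phi i i.

Lemma sum_expect_PT_outer_psi s : s^* = s -> s * s = 1 ->
  \sum_(p : 'I_d * 'I_d | (p.1 < p.2)%N)
     expect (PT (outer (psi s p.1 p.2) (psi s p.1 p.2))) phi =
  2^-1 * (norm2 - diag_norm2 + s * (trace_norm2 - diag_norm2)).
Proof.
move=> s_real s_sqr; under eq_bigr do rewrite expect_PT_outer_psi //.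
rewrite -mulr_sumr big_split -mulr_sumr /=.
rewrite (@sum_lt_pairs_sym _ _ (fun i j => (phi i j)^* * phi i j)).
rewrite (@sum_lt_pairs_sym _ _ (fun i j => (phi i i)^* * phi j j)).
rewrite /trace_norm2 rmorph_sum mulr_suml.
by under [in RHS]eq_bigr do rewrite mulr_sumr.
Qed.

Lemma expect_PT_rho_bc b c :
  expect (PT (rho_bc d b c)) phi =
  (a_coef d b c - c)%:C%C * diag_norm2 + ((b + c) / 2)%:C%C * norm2
    + ((c - b) / 2)%:C%C * trace_norm2.
Proof.
rewrite /rho_bc !PT_opD !PT_opZ !PT_opsum !expect_opD !expect_opZ !expect_opsum.
under eq_bigr do rewrite expect_PT_outer_ket.
rewrite !sum_expect_PT_outer_psi ?(conjC1, rmorphN1, mulr1, mulrNN) //.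
rewrite -/diag_norm2; move: (a_coef d b c) => a.
by rewrite !(rmorphB, rmorphD, fmorphV, rmorph_nat) /=; field.
Qed.

Lemma diag_norm2_le_norm2 : diag_norm2 <= norm2.
Proof.
rewrite -subr_ge0 -sumrB sumr_ge0 // => i _.
rewrite (bigD1 i) //= addrC addrK sumr_ge0 // => j _.
by rewrite mulrC mul_conjC_ge0.
Qed.

Lemma trace_norm2_le_diag : trace_norm2 <= d%:R * diag_norm2.
Proof. exact: norm2_sum_le. Qed.

Lemma trace_norm2_le_schmidt_rank :
  trace_norm2 <= (schmidt_rank phi)%:R * norm2.
Proof.
have := mxtrace_norm2_le_rank (\matrix_(i, j) phi i j).
rewrite /mxtrace; under eq_bigr do rewrite mxE.
by under [in X in _ <= _ * X -> _]eq_bigr do under eq_bigr do rewrite mxE.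
Qed.

Lemma expect_PT_rho_bc_cone {b c x1 x2 x3 : R} :
  a_coef d b c - c = - x1 + d%:R * x2 -> (b + c) / 2 = x1 + 2 * x3 ->
  (c - b) / 2 = - x2 - x3 ->
  expect (PT (rho_bc d b c)) phi =
    x1%:C%C * (norm2 - diag_norm2) + x2%:C%C * (d%:R * diag_norm2 - trace_norm2)
    + x3%:C%C * (2 * norm2 - trace_norm2).
Proof.
move=> Ea Eplus Eminus; rewrite expect_PT_rho_bc Ea Eplus Eminus.
by rewrite !(rmorphB, rmorphD, rmorphM, rmorphN, rmorph_nat) /=; ring.
Qed.

End Expectation.

Lemma in_hull_BCGK_cone {R : realType} {d : nat} {b c : R} :
  (2 <= d)%N -> in_hull_BCGK d b c ->
  exists x1 x2 x3 : R, [/\ 0 <= x1, 0 <= x2 & 0 <= x3] /\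
    [/\ a_coef d b c - c = - x1 + d%:R * x2, (b + c) / 2 = x1 + 2 * x3
      & (c - b) / 2 = - x2 - x3].
Proof.
move=> d_ge2 [l1 [l2 [l3 [l4 [[l1_ge0 l2_ge0 l3_ge0 l4_ge0] [l_sum [-> ->]]]]]]].
rewrite /a_coef /=; set n : R := d%:R.
have n_ge2 : 2 <= n by rewrite /n ler_nat.
have l1E : l1 = 1 - l2 - l3 - l4 by lra.
have pB : 0 < 2 * n * (n - 1) by rewrite -mulrA mulr_gt0 ?mulr_gt0 //; lra.
have pK : 0 < n * (n - 1) by rewrite mulr_gt0 //; lra.
have pC : 0 < n * (3 * n - 2) by rewrite mulr_gt0 //; lra.
have pG : 0 < n * (2 * n - 1) by rewrite mulr_gt0 //; lra.
(* Weights contributed by the vertices: K to x1, B to x1 and x2, C to x2 and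
   x3, G to x3. *)
exists (l1 / (2 * n * (n - 1)) + l4 / (n * (n - 1))),
  (l1 / (2 * n * (n - 1)) + l2 / (n * (3 * n - 2))),
  (l2 / (n * (3 * n - 2)) + l3 / (n * (2 * n - 1))).
split; first by split; apply: addr_ge0; apply: divr_ge0 => //; apply: ltW.
have [n0 n1 n3 n2] : [/\ n != 0, n - 1 != 0, 3 * n - 2 != 0 & 2 * n - 1 != 0].
  by split; apply/eqP => ?; lra.
by rewrite l1E; split; field; rewrite ?n0 ?n1 ?n2 ?n3.
Qed.

Theorem proposition1 (R : realType) (d : nat) (b c : R) :
  (2 <= d)%N -> in_hull_BCGK d b c ->
  forall phi : bivec R d, schmidt_rank phi = 2%N ->
  0 <= expect (PT (rho_bc d b c)) phi.
Proof.
move=> d_ge2 hull phi rank2.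
have [x1 [x2 [x3 [[x1_ge0 x2_ge0 x3_ge0] [Ea Eplus Eminus]]]]] :=
  in_hull_BCGK_cone d_ge2 hull.
rewrite (expect_PT_rho_bc_cone phi Ea Eplus Eminus).
have := diag_norm2_le_norm2 phi; have := trace_norm2_le_diag phi.
have := trace_norm2_le_schmidt_rank phi; rewrite rank2 => T_le_2F T_le_dD D_le_F.
by rewrite !addr_ge0 // mulr_ge0 ?ler0c ?subr_ge0.
Qed.
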